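(* Let $G$ be an abelian, second countable, locally compact group with Haar measure $\mu$, let $K\subset G$ be a Borel set which is a semigroup, and assume there is a F\o lner sequence $(\Lambda_n)$ in $G$ with $\Lambda_n\subset K$ for all $n$. Let $\Sigma$ be the $\sigma$-algebra of Borel subsets of $G$ contained in $K$, and let $E\in\Sigma$ be relatively dense in $K$. Then: (1) There exist $r\in\mathbb{N}$ and $g_1,\dots,g_r\in K$ such that for each $B\in\Sigma$ with $\mu(B)<\infty$ there is $j\in\{1,\dots,r\}$ with $\mu((Bg_j)\cap E)\ge\mu(B)/r$. (2) $E$ has positive lower density relative to some F\o lner sequence $(\Lambda'_n)$ in $G$ with $\Lambda'_n\subset K$ for all $n$. (3) If $f:K\to\mathbb{R}$ is $\Sigma$-measurable with $f\ge0$ and $f(g)\ge\alpha$ for some $\alpha>0$ and all $g\in E$, then there exists a F\o lner sequence $(\Lambda'_n)$ in $G$ with $\Lambda'_n\subset K$ for all $n$ such that $\liminf_{n\to\infty}\frac{1}{\mu(\Lambda'_n)}\int_{\Lambda'_n}f\,d\mu>0$.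
   Context: A F\o lner sequence in $G$ is a sequence $(\Lambda_n)$ of compact subsets with $\mu(\Lambda_n)>0$ and $\lim_n\mu(\Lambda_n\,\Delta\,(\Lambda_ng))/\mu(\Lambda_n)=0$ for all $g\in G$. A set $E\subset K$ is relatively dense in $K$ if there exist $r\in\mathbb{N}$ and $g_1,\dots,g_r\in K$ with $E\cap\{gg_1,\dots,gg_r\}\neq\varnothing$ for all $g\in K$. $Bg=\{bg:b\in B\}$. A set $V\in\Sigma$ has positive lower density relative to $(\Lambda'_n)$ if $\liminf_{n\to\infty}\mu(\Lambda'_n\cap V)/\mu(\Lambda'_n)>0$. *)

From HB Require Import structures.
From mathcomp Require Import all_boot all_order all_algebra.
From mathcomp Require Import all_classical all_reals all_analysis.
Set Implicit Arguments. Unset Strict Implicit. Unset Printing Implicit Defensive.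
Import Order.TTheory GRing.Theory Num.Theory.
Import numFieldNormedType.Exports.
Local Open Scope classical_set_scope.
Local Open Scope ring_scope.

Notation borelType G := (@g_sigma_algebraType (GRing.Zmodule.sort G) (@open G)).

(* Translate of a set: B g = {b g : b in B}, written additively since G is
   abelian (topologicalZmodType). *)
Definition transl (G : zmodType) (B : set G) (g : G) : set G :=
  [set b + g | b in B].

Definition symdiff (T : Type) (A B : set T) : set T := (A `\` B) `|` (B `\` A).

Definition folner (R : realType) (G : topologicalZmodType)
  (mu : {measure set (borelType G) -> \bar R}) (L : nat -> set G) : Prop :=
  (forall n, compact (L n) /\ (0 < mu (L n))%E) /\
  (forall g : G,
     (fun n : nat => (fine (mu (symdiff (L n) (transl (L n) g)))
                       / fine (mu (L n)) : R)%R) @ \oo --> (0%R : R)).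

Local Open Scope ereal_scope.

(* mu is a (left = right, G abelian) Haar measure: a nonzero
   translation-invariant Radon measure on the Borel sets. *)
Definition haar_measure (R : realType) (G : topologicalZmodType)
  (mu : {measure set (borelType G) -> \bar R}) : Prop :=
  [/\ (forall (A : set (borelType G)) (g : G), measurable A ->
          mu (transl A g) = mu A),
      (forall U : set G, open U -> U !=set0 -> 0 < mu U),
      (forall C : set G, compact C -> mu C < +oo),
      (forall A : set (borelType G), measurable A ->
          mu A = ereal_inf [set mu U | U in [set U : set G | open U /\ A `<=` U]]) &
      (forall U : set G, open U ->
          mu U = ereal_sup [set mu C | C in [set C : set G | compact C /\ C `<=` U]])].

Definition rel_dense (G : zmodType) (K E : set G) : Prop :=
  exists (r : nat) (gs : 'I_r -> G), (forall i, K (gs i)) /\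
    forall g, K g -> exists i, E (g + gs i)%R.

Definition semigroup (G : zmodType) (K : set G) : Prop :=
  forall x y, K x -> K y -> K (x + y)%R.

From HB Require Import structures.
From mathcomp Require Import all_boot all_order all_algebra.
From mathcomp Require Import all_classical all_reals all_analysis.
From mathcomp Require Import measurable_realfun.
Set Implicit Arguments. Unset Strict Implicit. Unset Printing Implicit Defensive.
Import Order.TTheory GRing.Theory Num.Theory.
Import numFieldNormedType.Exports.
Local Open Scope classical_set_scope.
Local Open Scope ring_scope.

(* Relative density gives g_1, ..., g_r in K such that every g in K has some
   g + g_j in E, so a set B inside K is covered by the r sets B ∩ (E - g_j),
   whose measures are mu((B + g_j) ∩ E) by invariance; one of them carries at
   least mu(B)/r.  Applied to a Følner sequence L_n inside K this picks shifts
   with mu((L_n + g_{j_n}) ∩ E) >= mu(L_n)/r, and the shifted sets still form a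
   Følner sequence inside K (K is a semigroup), of density at least 1/r in E;
   integrating f >= alpha on E then gives (3). *)

Section Translation.
Variable G : zmodType.
Implicit Types (A B : set G) (g h : G).

Lemma translE A g : transl A g = (fun x => x - g) @^-1` A.
Proof.
apply/seteqP; split => x /=; first by case=> b Ab <-; rewrite addrK.
by move=> Ax; exists (x - g) => //; rewrite subrK.
Qed.

Lemma transl_setI A B g : transl (A `&` B) g = transl A g `&` transl B g.
Proof. by rewrite !translE preimage_setI. Qed.

Lemma translNK A g : transl (transl A (- g)) g = A.
Proof. by rewrite !translE; apply/seteqP; split => x /=; rewrite opprK subrK. Qed.

Lemma translC A g h : transl (transl A g) h = transl (transl A h) g.
Proof. by rewrite !translE; apply/seteqP; split => x /=; rewrite addrAC. Qed.

Lemma symdiff_transl A B g :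
  symdiff (transl A g) (transl B g) = transl (symdiff A B) g.
Proof. by rewrite !translE. Qed.

Lemma semigroup_transl_sub K A g :
  semigroup K -> A `<=` K -> K g -> transl A g `<=` K.
Proof. by move=> sK AK Kg _ [a Aa <-]; apply: sK => //; exact: AK. Qed.

End Translation.

Section BorelTranslation.
Variable G : topologicalZmodType.

Lemma continuous_addr (g : G) : continuous (fun x : G => x + g).
Proof.
move=> x; apply: (@continuous_comp _ _ _ (fun x => (x, g)) (fun x : G * G => x.1 + x.2)).
  by apply: cvg_pair; [exact: cvg_id|exact: cvg_cst].
exact: add_continuous.
Qed.

Lemma measurable_transl (A : set (borelType G)) (g : G) :
  measurable A -> measurable (transl A g : set (borelType G)).
Proof.
move=> mA; rewrite translE.
have mf : measurable_fun [set: borelType G] (fun x : borelType G => x - g : borelType G).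
  apply: (@measurability _ _ (borelType G) (borelType G) setT _ (@open G)) => //.
  move=> _ [U oU <-]; apply: sub_sigma_algebra; rewrite setTI.
  by apply: open_comp => // y _; exact: continuous_addr.
by have := mf measurableT A mA; rewrite setTI.
Qed.

Lemma compact_transl (A : set G) (g : G) : compact A -> compact (transl A g).
Proof.
move=> cA; apply: (@continuous_compact _ _ (fun x => x + g)) => //.
exact/continuous_subspaceT/continuous_addr.
Qed.

Lemma compact_borel_measurable (A : set (borelType G)) :
  hausdorff_space G -> compact (A : set G) -> measurable A.
Proof.
move=> hG /(compact_closed hG)/closed_openC oA.
by rewrite -(setCK A); apply: measurableC; exact: sub_sigma_algebra.
Qed.

End BorelTranslation.

Local Open Scope ereal_scope.

Lemma sume_pigeonhole (R : realFieldType) n (a : 'I_n.+1 -> \bar R) (b : \bar R) :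
  b <= \sum_(k < n.+1) a k -> exists k, b * (n.+1%:R^-1)%:E <= a k.
Proof.
move=> le_b_sum.
case: (@arg_maxP _ _ _ ord0 xpredT a isT) => k _ ak_max; exists k.
have : b <= n.+1%:R%:E * a k.
  have : \sum_(i < n.+1) a i <= \sum_(i < n.+1) a k.
    by apply: lee_sum => i _; exact: ak_max.
  by rewrite sumr_const card_ord mule_natl; exact: le_trans.
move/(lee_wpmul2r (_ : 0 <= (n.+1%:R^-1)%:E)).
rewrite lee_fin invr_ge0 ler0n => /(_ isT).
by rewrite muleAC -EFinM divff ?pnatr_eq0 // mul1e.
Qed.

Lemma limn_einf_ge (R : realType) (u : (\bar R)^nat) c :
  (forall n, c <= u n) -> c <= limn_einf u.
Proof.
move=> cu; rewrite limn_einf_lim; apply: lime_ge; first exact: is_cvg_einfs.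
by apply: nearW => n; apply: le_ereal_inf_tmp => _ [k _ <-]; exact: cu.
Qed.

Lemma lee_pdivlMr_fine (R : realFieldType) (x y : \bar R) (c : R) :
  0 < y -> y < +oo -> y * c%:E <= x -> c%:E <= x * ((fine y)^-1)%:E.
Proof.
move=> y_gt0 y_fin; have fy_gt0 : (0 < fine y)%R by apply: fine_gt0; rewrite y_gt0.
by rewrite lee_pdivlMr // muleC fineK // ge0_fin_numE // ltW.
Qed.

Lemma integral_ge_mul_measure (R : realType) (d : measure_display)
    (T : measurableType d) (mu : {measure set T -> \bar R})
    (A D : set T) (f : T -> R) (alpha : R) :
  measurable A -> measurable D -> D `<=` A -> measurable_fun A f ->
  (forall x, A x -> 0 <= f x)%R -> (0 <= alpha)%R ->
  (forall x, D x -> alpha <= f x)%R ->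
  alpha%:E * mu D <= \int[mu]_(x in A) (f x)%:E.
Proof.
move=> mA mD DA mf f0 a0 fD.
have mfE : measurable_fun A (fun x : T => (f x)%:E) by exact/measurable_EFinP.
rewrite -integral_cst //; apply: (@le_trans _ _ (\int[mu]_(x in D) (f x)%:E)).
  by apply: ge0_le_integral => //; exact: measurable_funS mfE.
by apply: ge0_subset_integral => // x /f0; rewrite lee_fin.
Qed.

Section TranslationInvariantMeasure.
Variables (R : realType) (G : topologicalZmodType).
Variable mu : {measure set (borelType G) -> \bar R}.
Hypothesis mu_transl : forall (A : set (borelType G)) (g : G),
  measurable A -> mu (transl A g) = mu A.

Lemma folner_nonempty (L : nat -> set G) n : folner mu L -> L n !=set0.
Proof.
move=> [/(_ n)[_ Lpos] _]; apply/set0P; apply: contraTneq Lpos => ->.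
by rewrite measure0 ltxx.
Qed.

Lemma folner_transl (L : nat -> set G) (h : nat -> G) :
  hausdorff_space G -> folner mu L -> folner mu (fun n => transl (L n) (h n)).
Proof.
move=> hG [LF1 LF2]; have mL n := compact_borel_measurable hG (LF1 n).1.
split=> [n|g].
  by split; [exact: compact_transl (LF1 n).1|rewrite mu_transl //; exact: (LF1 n).2].
apply: cvg_trans (LF2 g); apply: near_eq_cvg; apply: nearW => n.
rewrite mu_transl // translC symdiff_transl mu_transl //.
by apply: measurableU; apply: measurableD => //; exact: measurable_transl.
Qed.

Lemma rel_dense_transl_ge (K E B : set (borelType G)) r (gs : 'I_r.+1 -> G) :
  measurable E -> measurable B -> B `<=` K ->
  (forall g : G, K g -> exists i, E (g + gs i)%R) ->
  exists j, mu B * (r.+1%:R^-1)%:E <= mu (transl B (gs j) `&` E).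
Proof.
move=> mE mB BK hgs.
pose A k : set (borelType G) := B `&` transl E (- gs (inord k)).
have mA k : measurable (A k) by apply: measurableI => //; exact: measurable_transl.
apply: sume_pigeonhole.
have -> : \sum_(j < r.+1) mu (transl B (gs j) `&` E) = \sum_(k < r.+1) mu (A k).
  apply: eq_bigr => j _.
  by rewrite -(mu_transl (gs j) (mA j)) /A inord_val transl_setI translNK.
apply: content_subadditive => [k _||x Bx]; [exact: mA|exact: mB|].
have [i Ei] := hgs _ (BK _ Bx); rewrite -bigcup_mkord.
by exists (val i) => //=; split => //; rewrite translE /= inord_val opprK.
Qed.

Lemma folner_transl_dense (K E : set (borelType G)) (L : nat -> set G)
    r (gs : 'I_r.+1 -> G) :
  hausdorff_space G -> semigroup K -> measurable E ->
  folner mu L -> (forall n, L n `<=` K) -> (forall i, K (gs i)) ->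
  (forall g : G, K g -> exists i, E (g + gs i)%R) ->
  exists L' : nat -> set G, [/\ folner mu L', forall n, L' n `<=` K &
    forall n, mu (L' n) * (r.+1%:R^-1)%:E <= mu (L' n `&` E)].
Proof.
move=> hG sK mE FL LK Kgs hgs.
have mL n := compact_borel_measurable hG (FL.1 n).1.
have [j Lj] := choice (fun n => rel_dense_transl_ge mE (mL n) (LK n) hgs).
exists (fun n => transl (L n) (gs (j n))); split => [|n|n].
- exact: folner_transl.
- exact: semigroup_transl_sub sK (LK n) (Kgs (j n)).
- by rewrite mu_transl //; exact: Lj.
Qed.

End TranslationInvariantMeasure.

Theorem lemma5p12 (R : realType) (G : topologicalZmodType)
  (mu : {measure set (borelType G) -> \bar R})
  (K E : set (borelType G)) (L : nat -> set G) :
  hausdorff_space G -> locally_compact [set: G] -> @second_countable G ->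
  haar_measure mu ->
  measurable K -> semigroup K ->
  folner mu L -> (forall n, L n `<=` K) ->
  measurable E -> E `<=` K -> rel_dense K E ->
  [/\
   (* (1) *)
   exists (r : nat) (gs : 'I_r -> G), (forall j, K (gs j)) /\
     forall B : set (borelType G), measurable B -> B `<=` K -> mu B < +oo ->
       exists j : 'I_r, mu (transl B (gs j) `&` E) >= mu B * ((r%:R)^-1)%:E,
   (* (2) *)
   exists L' : nat -> set G, folner mu L' /\ (forall n, L' n `<=` K) /\
     0 < limn_einf (fun n => mu (L' n `&` E) * ((fine (mu (L' n)))^-1)%:E) &
   (* (3) *)
   forall (f : G -> R) (alpha : R),
     measurable_fun K f -> (forall g, K g -> (0 <= f g)%R) ->
     (0 < alpha)%R -> (forall g, E g -> (alpha <= f g)%R) ->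
     exists L' : nat -> set G, folner mu L' /\ (forall n, L' n `<=` K) /\
       0 < limn_einf (fun n =>
             ((fine (mu (L' n)))^-1)%:E * \int[mu]_(x in L' n) (f x)%:E)].
Proof.
move=> hG _ _ [mu_transl _ mu_cpt _ _] mK sK FL LK mE _ [r [gs [Kgs hgs]]].
have [x0 Lx0] := folner_nonempty 0 FL.
case: r gs Kgs hgs => [|r] gs Kgs hgs; first by have [[]] := hgs _ (LK _ _ Lx0).
have [L' [FL' L'K dens]] := folner_transl_dense mu_transl hG sK mE FL LK Kgs hgs.
have ratio_ge n c x : mu (L' n) * c%:E <= x -> c%:E <= x * ((fine (mu (L' n)))^-1)%:E.
  by apply: lee_pdivlMr_fine; [exact: (FL'.1 n).2|exact: mu_cpt (FL'.1 n).1].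
have inv_gt0 : (0 < r.+1%:R^-1 :> R)%R by rewrite invr_gt0 ltr0n.
split.
- exists r.+1, gs; split => [//|B mB BK _].
  exact: (rel_dense_transl_ge mu_transl mE mB BK hgs).
- exists L'; split => //; split => //.
  apply: (lt_le_trans (_ : 0 < (r.+1%:R^-1)%:E)); first by rewrite lte_fin.
  by apply: limn_einf_ge => n; apply: ratio_ge.
- move=> f alpha mf f0 a0 fE; exists L'; split => //; split => //.
  apply: (lt_le_trans (_ : 0 < (alpha * r.+1%:R^-1)%:E)).
    by rewrite lte_fin; exact: mulr_gt0.
  apply: limn_einf_ge => n; rewrite muleC; apply: ratio_ge.
  rewrite EFinM muleCA; apply: le_trans (lee_wpmul2l _ (dens n)) _.
    by rewrite lee_fin ltW.
  have mL' := compact_borel_measurable hG (FL'.1 n).1.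
  apply: integral_ge_mul_measure => //.
  - exact: measurableI.
  - exact: measurable_funS mK (L'K n) mf.
  - by move=> x /L'K /f0.
  - exact: ltW.
  - by move=> x [_ /fE].
Qed.
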